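(* Let $V$ be a finite vocabulary. Each word $x\in V$ has a synonym set $S_x\subseteq V$ with $x\in S_x$, the synonym relation being symmetric, and a nonempty perturbation set $P_x\subseteq V$. Fix $L\ge1$, $0\le R\le L$, a finite label set $\mathcal{Y}$ and a classifier $f:V^L\to\mathcal{Y}$. For $X=x_1,\ldots,x_L\in V^L$ let $S_X=\{X'\in V^L: \sum_i\mathbb{I}\{x'_i\ne x_i\}\le R,\ x'_i\in S_{x_i}\ \forall i\}$, $\Pi_X(Z)=\prod_{i=1}^L\mathbb{I}\{z_i\in P_{x_i}\}/|P_{x_i}|$, $g^{\mathrm{RS}}(X,c)=\mathbb{P}_{Z\sim\Pi_X}(f(Z)=c)$, and, with $\mathcal{H}_{[0,1]}$ the set of all functions $h:V^L\to[0,1]$ and $\Pi_X[h]=\mathbb{E}_{Z\sim\Pi_X}[h(Z)]$, $$g^{\mathrm{RS}}_{low}(X,c)=\min_{h\in\mathcal{H}_{[0,1]}}\min_{X'\in S_X}\{\Pi_{X'}[h]:\Pi_X[h]=g^{\mathrm{RS}}(X,c)\},\quad g^{\mathrm{RS}}_{up}(X,c)=\max_{h\in\mathcal{H}_{[0,1]}}\max_{X'\in S_X}\{\Pi_{X'}[h]:\Pi_X[h]=g^{\mathrm{RS}}(X,c)\}.$$ Assume $|P_x|=|P_{x'}|$ for every word $x$ and every $x'\in S_x$. Let $q_x=\min_{x'\in S_x}|P_x\cap P_{x'}|/|P_x|$, and for a sentence $X$ order its positions $i_1,\ldots,i_L$ so that $q_{x_{i_1}}\le\cdots\le q_{x_{i_L}}$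 and put $q_X=1-\prod_{j=1}^R q_{x_{i_j}}$. Then for all $X$ and $c\in\mathcal{Y}$, $$g^{\mathrm{RS}}_{low}(X,c)\ge\max\big(g^{\mathrm{RS}}(X,c)-q_X,0\big),\qquad g^{\mathrm{RS}}_{up}(X,c)\le\min\big(g^{\mathrm{RS}}(X,c)+q_X,1\big).$$ *)

From HB Require Import structures.
From mathcomp Require Import all_boot all_order all_algebra.
From mathcomp Require Import classical_sets reals.
Set Implicit Arguments. Unset Strict Implicit. Unset Printing Implicit Defensive.
Import Order.TTheory GRing.Theory Num.Theory.
Local Open Scope ring_scope.
Local Open Scope classical_set_scope.

Section Defs.
Variables (R : realType) (V : finType) (L : nat).

Definition sentence := {ffun 'I_L -> V}.

Variable P : V -> {set V}.
Variable S : V -> {set V}.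

Definition PiX (X Z : sentence) : R :=
  \prod_(i < L) ((Z i \in P (X i))%:R / #|P (X i)|%:R).

Definition PiE (X : sentence) (h : sentence -> R) : R :=
  \sum_(Z : sentence) PiX X Z * h Z.

Definition gRS (Y : finType) (f : sentence -> Y) (X : sentence) (c : Y) : R :=
  \sum_(Z : sentence) PiX X Z * (f Z == c)%:R.

Definition SX (Rad : nat) (X : sentence) : {set sentence} :=
  [set X' : sentence | (#|[set i : 'I_L | X' i != X i]| <= Rad)%N
                       && [forall i : 'I_L, X' i \in S (X i)]].

Definition H01 (h : sentence -> R) : Prop := forall Z, 0 <= h Z <= 1.

Definition feasible_vals (Y : finType) (f : sentence -> Y) (Rad : nat)
  (X : sentence) (c : Y) : set R :=
  [set v | exists h, H01 h /\ exists X', X' \in SX Rad X /\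
                     PiE X h = gRS f X c /\ v = PiE X' h].

(* min / max over h and X' (attained; we use inf / sup of the value set) *)
Definition g_low Y f Rad X c : R := inf (@feasible_vals Y f Rad X c).
Definition g_up Y f Rad X c : R := sup (@feasible_vals Y f Rad X c).

(* q_x = min_{x' in S_x} |P_x \cap P_x'| / |P_x|  (S_x is nonempty since x in S_x,
   and all values are <= 1, so folding min from 1 gives the minimum) *)
Definition qx (x : V) : R :=
  \big[Order.min/1]_(x' in S x) (#|P x :&: P x'|%:R / #|P x|%:R).

Definition qX (Rad : nat) (X : sentence) : R :=
  1 - \prod_(q <- take Rad (sort <=%R [seq qx (X i) | i <- enum 'I_L])) q.

End Defs.

(* For X' in S_X, the distributions Pi_X and Pi_X' share the common part
   w(Z) = prod_i 1{z_i in P_{x_i} ∩ P_{x'_i}} / |P_{x_i}| (this is where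
   |P_{x_i}| = |P_{x'_i}| is used), of total mass
   prod_i |P_{x_i} ∩ P_{x'_i}| / |P_{x_i}|.  The factors at unchanged positions
   are 1, the at most R others are at least q_{x_i}, so this mass is at least
   the product of the R smallest q's, that is 1 - q_X.  For h with values in
   [0,1], Pi_X[h] and Pi_X'[h] therefore differ by at most q_X, which bounds
   every feasible value and hence g_low and g_up. *)

From mathcomp Require Import all_boot all_order all_algebra.
From mathcomp Require Import classical_sets reals boolp.
Import Order.TTheory GRing.Theory Num.Theory.
Set Implicit Arguments. Unset Strict Implicit. Unset Printing Implicit Defensive.
Local Open Scope ring_scope.

Lemma prod_take_sorted_le (R : realDomainType) (t u w : seq R) k :
  sorted <=%R t -> all (fun x => 0 <= x <= 1) t -> perm_eq t (u ++ w) ->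
  (size u <= k)%N ->
  \prod_(q <- take k t) q <= \prod_(q <- u) q.
Proof.
elim: t u w k => [|a t IH] u w k t_sorted t01 tuw size_u.
  by case: u tuw size_u => // b u /perm_size; rewrite size_cat.
have take01 m : \prod_(q <- take m (a :: t)) q <= 1.
  by rewrite big_seq; apply: prodr_ile1 => q /mem_take; apply: (allP t01).
case: k size_u => [|k] size_u; first by case: u {tuw} size_u.
case: u tuw size_u => [|b u] tuw size_u; first by rewrite big_nil take01.
have /andP[/andP[a0 _] t01'] := t01.
have t_sorted' : sorted <=%R t := path_sorted t_sorted.
rewrite /= big_cons.
have : a \in (b :: u) ++ w by rewrite -(perm_mem tuw) mem_head.
rewrite mem_cat => /orP[a_u | a_w].
  have t_rem : perm_eq t (rem a (b :: u) ++ w).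
    rewrite -(perm_cons a) (perm_trans tuw) //.
    by rewrite -cat_cons perm_cat2r perm_to_rem.
  rewrite (perm_big _ (perm_to_rem a_u)) big_cons ler_wpM2l //.
  by apply: IH t_rem _; rewrite // size_rem.
(* [a] lies outside [u]: trading the head [b] of [u] for the smaller [a]
   reduces to the induction hypothesis. *)
have t_swap : perm_eq t (u ++ b :: rem a w).
  rewrite -(perm_cons a) (perm_trans tuw) //.
  rewrite (perm_trans (_ : perm_eq _ ((b :: u) ++ a :: rem a w))) //.
    by rewrite perm_cat2l perm_to_rem.
  by apply/permP => p; rewrite /= !count_cat /= !(addnCA (count p u)) addnCA.
have a_le_b : a <= b.
  apply: (allP (order_path_min le_trans t_sorted)).
  by rewrite (perm_mem t_swap) mem_cat mem_head orbT.
have u0 : 0 <= \prod_(q <- u) q.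
  rewrite big_seq; apply: prodr_ge0 => q q_u.
  suff /andP[] : 0 <= q <= 1 by [].
  by apply: (allP t01); rewrite (perm_mem tuw) mem_cat inE q_u orbT.
rewrite big_cons; apply: le_trans (ler_wpM2r u0 a_le_b).
by rewrite ler_wpM2l // (IH _ _ k t_sorted' t01' t_swap).
Qed.

Lemma card_classic_set (T : finType) (p : pred T) :
  #|[set x | p x]%classic| = #|p|.
Proof. by apply: eq_card => x; apply/asboolP/idP. Qed.

Lemma size_filter_enum (T : finType) (p : pred T) :
  size (filter p (enum T)) = #|p|.
Proof. by rewrite -sum1_card -sum1_size big_filter big_enum_cond. Qed.

Lemma sum_ffun_prod_indicator (R : fieldType) (I T : finType)
    (A : I -> {set T}) (n : I -> R) :
  \sum_(Z : {ffun I -> T}) \prod_i ((Z i \in A i)%:R / n i) =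
  \prod_i (#|A i|%:R / n i).
Proof.
rewrite -(bigA_distr_bigA (fun i j => (j \in A i)%:R / n i)).
apply: eq_bigr => i _.
rewrite -mulr_suml -natr_sum -sum1_card; congr (_%:R / _).
by rewrite [RHS]big_mkcond; apply: eq_bigr => j _; case: (j \in A i).
Qed.

Lemma sum_weighted_diff_le_excess (R : numDomainType) (T : finType)
    (p1 p2 w h : T -> R) :
  (forall z, w z <= p1 z) -> (forall z, w z <= p2 z) ->
  (forall z, 0 <= h z <= 1) ->
  \sum_z p1 z * h z - \sum_z p2 z * h z <= \sum_z (p1 z - w z).
Proof.
move=> w_p1 w_p2 h01.
have split_w p z : p z * h z = (p z - w z) * h z + w z * h z.
  by rewrite mulrBl subrK.
rewrite (eq_bigr _ (fun z _ => split_w p1 z)).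
rewrite (eq_bigr _ (fun z _ => split_w p2 z)).
rewrite !big_split /= opprD addrACA subrr addr0 lerBlDr ler_wpDr //.
  by apply: sumr_ge0 => z _; rewrite mulr_ge0 ?subr_ge0 //; case/andP: (h01 z).
rewrite -big_split; apply: ler_sum => z _.
by case/andP: (h01 z) => h0 h1; rewrite ler_piMr ?subr_ge0.
Qed.

Section SmoothedClassifier.
Variables (R : realType) (V : finType) (L : nat) (P S : V -> {set V}).
Hypothesis P_gt0 : forall x, (0 < #|P x|)%N.

Local Notation sentence := (sentence V L).
Local Notation PiX := (@PiX R V L P).
Local Notation PiE := (@PiE R V L P).
Local Notation H01 := (@H01 R V L).
Local Notation qx := (qx R P S).

Let size_P_neq0 x : #|P x|%:R != 0 :> R.
Proof. by rewrite pnatr_eq0 -lt0n. Qed.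

Lemma PiX_ge0 (X Z : sentence) : 0 <= PiX X Z.
Proof. by apply: prodr_ge0 => i _; rewrite divr_ge0 ?ler0n. Qed.

Lemma sum_PiX (X : sentence) : \sum_Z PiX X Z = 1.
Proof.
rewrite sum_ffun_prod_indicator.
by apply: big1 => i _; rewrite divff.
Qed.

Lemma PiE_ge0 (X : sentence) (h : sentence -> R) : H01 h -> 0 <= PiE X h.
Proof.
move=> h01; apply: sumr_ge0 => Z _.
by rewrite mulr_ge0 ?PiX_ge0 //; case/andP: (h01 Z).
Qed.

Lemma PiE_le1 (X : sentence) (h : sentence -> R) : H01 h -> PiE X h <= 1.
Proof.
move=> h01; rewrite -(sum_PiX X); apply: ler_sum => Z _.
by case/andP: (h01 Z) => h0 h1; rewrite ler_piMr ?PiX_ge0.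
Qed.

Definition overlap (X X' Z : sentence) : R :=
  \prod_(i < L) ((Z i \in P (X i) :&: P (X' i))%:R / #|P (X i)|%:R).

Lemma overlap_le_PiX (X X' Z : sentence) : overlap X X' Z <= PiX X Z.
Proof.
apply: ler_prod => i _.
rewrite divr_ge0 ?ler0n //= ler_pM2r ?invr_gt0 ?ltr0n //.
by rewrite ler_nat inE; case: (Z i \in P (X i)); case: (Z i \in P (X' i)).
Qed.

Hypothesis P_card_synonym : forall x x', x' \in S x -> #|P x| = #|P x'|.

Lemma overlap_le_PiX_synonym (X X' : sentence) :
  (forall i, X' i \in S (X i)) -> forall Z, overlap X X' Z <= PiX X' Z.
Proof.
move=> X'_syn Z; apply: ler_prod => i _; rewrite (P_card_synonym (X'_syn i)).
rewrite divr_ge0 ?ler0n //= ler_pM2r ?invr_gt0 ?ltr0n //.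
by rewrite ler_nat inE; case: (Z i \in P (X i)); case: (Z i \in P (X' i)).
Qed.

Lemma sum_overlap (X X' : sentence) :
  \sum_Z overlap X X' Z =
  \prod_(i < L) (#|P (X i) :&: P (X' i)|%:R / #|P (X i)|%:R).
Proof. exact: sum_ffun_prod_indicator. Qed.

Lemma qx_in01 x : 0 <= qx x <= 1.
Proof.
apply: (big_ind (fun v => 0 <= v <= 1)); first by rewrite ler01 lexx.
  by move=> a b /andP[a0 a1] /andP[b0 b1]; rewrite le_min a0 b0 ge_min a1.
move=> x' _; rewrite divr_ge0 ?ler0n //= ler_pdivrMr ?ltr0n // mul1r ler_nat.
by rewrite subset_leq_card // subsetIl.
Qed.

Lemma qx_le_ratio x x' : x' \in S x -> qx x <= #|P x :&: P x'|%:R / #|P x|%:R.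
Proof. by move=> x'_syn; rewrite /qx (bigD1 x') //= ge_min lexx. Qed.

Lemma prod_qx_changed_le (X X' : sentence) :
  (forall i, X' i \in S (X i)) ->
  \prod_(i | X' i != X i) qx (X i) <=
  \prod_(i < L) (#|P (X i) :&: P (X' i)|%:R / #|P (X i)|%:R).
Proof.
move=> X'_syn; rewrite [leRHS](bigID (fun i => X' i != X i)) /=.
rewrite [X in _ * X]big1 ?mulr1; last first.
  by move=> i; rewrite negbK => /eqP ->; rewrite finset.setIid divff.
apply: ler_prod => i _; case/andP: (qx_in01 (X i)) => -> _ /=.
exact: qx_le_ratio.
Qed.

Variable Rad : nat.
Local Notation qX := (@qX R V L P S Rad).
Local Notation SX := (@SX V L S Rad).

Lemma prod_smallest_qx_le (X X' : sentence) :
  (#|[pred i | X' i != X i]| <= Rad)%N ->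
  \prod_(q <- take Rad (sort <=%R [seq qx (X i) | i <- enum 'I_L])) q <=
  \prod_(i | X' i != X i) qx (X i).
Proof.
move=> few_changes; set changed := [pred i | X' i != X i].
have := @prod_take_sorted_le R (sort <=%R [seq qx (X i) | i <- enum 'I_L])
  [seq qx (X i) | i <- filter changed (enum 'I_L)]
  [seq qx (X i) | i <- filter (predC changed) (enum 'I_L)] Rad.
rewrite big_map big_filter big_enum_cond; apply.
- exact: sort_le_sorted.
- by rewrite all_sort; apply/allP => _ /mapP[i _ ->]; apply: qx_in01.
- by rewrite perm_sort -map_cat perm_map // perm_sym perm_filterC.
- by rewrite size_map size_filter_enum.
Qed.

Lemma excess_overlap_le_qX (X X' : sentence) :
  X' \in SX X -> 1 - \sum_Z overlap X X' Z <= qX X.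
Proof.
rewrite inE card_classic_set => /andP[few_changes /forallP X'_syn].
rewrite /qX lerD2l lerN2 sum_overlap.
exact: le_trans (prod_smallest_qx_le few_changes) (prod_qx_changed_le X'_syn).
Qed.

Lemma dist_PiE_le_qX (X X' : sentence) h :
  X' \in SX X -> H01 h -> `|PiE X' h - PiE X h| <= qX X.
Proof.
move=> X'_SX h01; have X'_syn : forall i, X' i \in S (X i).
  by move: X'_SX; rewrite inE => /andP[_ /forallP].
have excess_le Y : \sum_Z (PiX Y Z - overlap X X' Z) <= qX X.
  by rewrite sumrB sum_PiX excess_overlap_le_qX.
rewrite /PiE ler_norml; apply/andP; split.
  rewrite lerNl opprB; apply: le_trans (excess_le X).
  exact: sum_weighted_diff_le_excess (overlap_le_PiX X X')
    (overlap_le_PiX_synonym X'_syn) h01.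
apply: le_trans (excess_le X').
exact: sum_weighted_diff_le_excess (overlap_le_PiX_synonym X'_syn)
  (overlap_le_PiX X X') h01.
Qed.

Hypothesis S_refl : forall x, x \in S x.

Lemma self_in_SX (X : sentence) : X \in SX X.
Proof.
rewrite inE card_classic_set; apply/andP; split; last exact/forallP.
by rewrite eq_card0 // => i; rewrite unfold_in eqxx.
Qed.

Variables (Y : finType) (f : sentence -> Y).
Local Notation feasible_vals := (@feasible_vals R V L P S Y f Rad).
Local Notation gRS := (@gRS R V L P Y f).

Lemma feasible_vals_neq0 (X : sentence) (c : Y) :
  (feasible_vals X c !=set0)%classic.
Proof.
exists (PiE X (fun Z => (f Z == c)%:R)).
exists (fun Z => (f Z == c)%:R); split.
  by move=> Z; case: (f Z == c); rewrite ?lexx ?ler01.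
by exists X; split; [exact: self_in_SX | split].
Qed.

Lemma feasible_vals_bounds (X : sentence) (c : Y) v :
  feasible_vals X c v ->
  Num.max (gRS X c - qX X) 0 <= v /\ v <= Num.min (gRS X c + qX X) 1.
Proof.
move=> [h [h01 [X' [X'_SX [PiE_X_h ->]]]]].
move: (dist_PiE_le_qX X'_SX h01); rewrite ler_distl PiE_X_h => /andP[lo up].
by rewrite ge_max le_min lo up PiE_ge0 ?PiE_le1.
Qed.

End SmoothedClassifier.

Theorem theorem3 (R : realType) (V : finType) (L Rad : nat) (Y : finType)
  (S P : V -> {set V}) (f : sentence V L -> Y)
  (hL : (1 <= L)%N) (hRad : (Rad <= L)%N)
  (hSrefl : forall x, x \in S x)
  (hSsym : forall x y, y \in S x -> x \in S y)
  (hPne : forall x, (0 < #|P x|)%N)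
  (hPcard : forall x x', x' \in S x -> #|P x| = #|P x'|) :
  forall (X : sentence V L) (c : Y),
    Num.max (gRS R P f X c - qX R P S Rad X) 0 <= g_low R P S f Rad X c /\
    g_up R P S f Rad X c <= Num.min (gRS R P f X c + qX R P S Rad X) 1.
Proof.
move=> X c.
have nonempty := feasible_vals_neq0 R P Rad hSrefl f X c.
have bounds := @feasible_vals_bounds R V L P S hPne hPcard Rad Y f X c.
rewrite /g_low /g_up; split.
  by apply: (lb_le_inf nonempty) => v /bounds[].
by apply: (ge_sup nonempty) => v /bounds[].
Qed.
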